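(* Let $G$ be a connected simple graph on $n$ vertices with Laplacian $L$. If $\mu$ is an integer with $\mu\notin[0,n+1]$, then $L$ is not $\mu$-collapsed, i.e. the matrix $L-\mu\,\mathrm{Id}$ is spread.
   Context: A graph is simple if any two distinct vertices are joined by at most one edge (no loops). The Laplacian $L=(\ell_{ij})\in M_n(\mathbb{Z})$ has $\ell_{ii}$ equal to the degree of $v_i$ and $\ell_{ij}=-1$ if $v_i,v_j$ are adjacent, $0$ otherwise ($i\neq j$). For $M\in M_n(\mathbb{Z})$, let $\mathrm{Im}(M)$ be the $\mathbb{Z}$-span of its columns; $M$ is spread if the quotient map $\mathbb{Z}^n\to\mathbb{Z}^n/\mathrm{Im}(M)$ is injective on the standard basis $\{e_1,\dots,e_n\}$ (equivalently, $e_i-e_j\notin\mathrm{Im}(M)$ for all $i\neq j$). For an integer $\mu$, $M$ is $\mu$-collapsed if $M-\mu\,\mathrm{Id}$ is not spread. *)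

From HB Require Import structures.
From mathcomp Require Import all_boot all_order all_algebra.
Set Implicit Arguments. Unset Strict Implicit. Unset Printing Implicit Defensive.
Import Order.TTheory GRing.Theory Num.Theory.
Local Open Scope ring_scope.

Definition simple_graph (n : nat) (e : rel 'I_n) : Prop :=
  symmetric e /\ irreflexive e.

Definition connected_graph (n : nat) (e : rel 'I_n) : Prop :=
  forall i j : 'I_n, connect e i j.

Definition degree (n : nat) (e : rel 'I_n) (i : 'I_n) : nat :=
  #|[set j | e i j]|.

Definition laplacian (n : nat) (e : rel 'I_n) : 'M[int]_n :=
  \matrix_(i, j) (if i == j then (degree e i)%:Z
                  else if e i j then -1 else 0).

Definition std_basis (n : nat) (i : 'I_n) : 'cV[int]_n := delta_mx i 0.

Definition in_image (n : nat) (M : 'M[int]_n) (v : 'cV[int]_n) : Prop :=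
  exists x : 'cV[int]_n, M *m x = v.

Definition spread (n : nat) (M : 'M[int]_n) : Prop :=
  forall i j : 'I_n, i != j -> ~ in_image M (std_basis i - std_basis j).

Definition collapsed (n : nat) (M : 'M[int]_n) (mu : int) : Prop :=
  ~ spread (M - mu%:M).

From mathcomp Require Import all_boot all_order all_algebra zify.
Import Order.TTheory GRing.Theory Num.Theory.
Local Open Scope ring_scope.
Set Implicit Arguments. Unset Strict Implicit.

(** If (L - mu I) x = e_i - e_j, then summing entries (the columns of L sum to 0)
    gives -mu (sum x) = 0, so sum x = 0 and x attains a positive maximum m at
    some vertex k.  There (L x)_k = sum over neighbours l of (m - x_l) lies
    between 0 and n m.  For mu > n + 1 the k-th entry of (L - mu I) x is then at
    most (n - mu) m < -1.  For mu < 0 it is at least -mu m >= 1, which forces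
    k = i, -mu m = 1 and (L x)_i = 0: every neighbour of i is again a maximum,
    hence again equal to i, contradicting irreflexivity (i has a neighbour since
    the graph is connected and i <> j). *)

Section Laplacian.

Variables (n : nat) (e : rel 'I_n).
Hypothesis e_simple : simple_graph e.

Lemma laplacianE k l :
  laplacian e k l = (degree e k)%:Z *+ (k == l) - (e k l)%:R.
Proof.
rewrite mxE; have [<-|nkl] := eqVneq k l; first by rewrite (proj2 e_simple) subr0.
by rewrite sub0r; case: (e k l).
Qed.

Lemma mul_laplacian (x : 'cV[int]_n) k :
  (laplacian e *m x) k 0 = \sum_(l | e k l) (x k 0 - x l 0).
Proof.
rewrite mxE sumrB sumr_const; under eq_bigr do rewrite laplacianE mulrBl.
rewrite sumrB (bigD1 k) //= eqxx big1 => [|l nlk]; last first.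
  by rewrite eq_sym (negbTE nlk) mul0r.
rewrite addr0 [X in _ - X](bigID (e k)) /= [X in _ - (_ + X)]big1 => [|l]; last first.
  by move/negbTE->; rewrite mul0r.
rewrite addr0 mulr1n -natz mulr_natl /degree cardsE; congr (_ - _).
by apply: eq_bigr => l ->; rewrite mul1r.
Qed.

Lemma sum_mul_laplacian (x : 'cV[int]_n) : \sum_k (laplacian e *m x) k 0 = 0.
Proof.
pose f k l := if e k l then x k 0 - x l 0 else 0.
have f_anti k l : f l k = - f k l.
  by rewrite /f (proj1 e_simple l k); case: (e k l); rewrite ?opprB ?oppr0.
have -> : \sum_k (laplacian e *m x) k 0 = \sum_k \sum_l f k l.
  by apply: eq_bigr => k _; rewrite mul_laplacian big_mkcond.
set S := \sum_k _; have : S = - S.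
  rewrite {1}/S exchange_big /= -sumrN; apply: eq_bigr => l _.
  by rewrite -sumrN; apply: eq_bigr => k _; exact: f_anti.
lia.
Qed.

Section AtMaximum.

Variables (x : 'cV[int]_n) (k : 'I_n).
Hypothesis k_max : forall l, x l 0 <= x k 0.

Lemma mul_laplacian_max_ge0 : 0 <= (laplacian e *m x) k 0.
Proof. by rewrite mul_laplacian; apply: sumr_ge0 => l _; rewrite subr_ge0. Qed.

Lemma mul_laplacian_max_le : (laplacian e *m x) k 0 <= x k 0 *+ n - \sum_l x l 0.
Proof.
rewrite mul_laplacian -[X in x k 0 *+ X]card_ord -sumr_const -sumrB.
rewrite [leRHS](bigID (e k)) /= lerDl.
by apply: sumr_ge0 => l _; rewrite subr_ge0.
Qed.

Lemma mul_laplacian_max_le0 l :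
  (laplacian e *m x) k 0 <= 0 -> e k l -> x l 0 = x k 0.
Proof.
move=> Lx_le0 ekl; apply/eqP; rewrite eq_sym -subr_eq0; apply/eqP.
apply: (psumr_eq0P (P := e k) (F := fun l => x k 0 - x l 0)) ekl => [l' _|].
  by rewrite subr_ge0.
by rewrite -mul_laplacian; apply/eqP; rewrite eq_le Lx_le0 mul_laplacian_max_ge0.
Qed.

End AtMaximum.

End Laplacian.

Lemma connect_neq_edge (T : finType) (r : rel T) (a b : T) :
  connect r a b -> a != b -> exists c, r a c.
Proof.
case/connectP => [[|c p] /=]; first by move=> _ ->; rewrite eqxx.
by case/andP=> rac _ _ _; exists c.
Qed.

Section Solution.

Variables (n : nat) (e : rel 'I_n) (mu : int) (i j : 'I_n) (x : 'cV[int]_n).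
Hypotheses (e_simple : simple_graph e) (mu_neq0 : mu != 0) (i_neq_j : i != j).
Hypothesis x_sol : (laplacian e - mu%:M) *m x = std_basis i - std_basis j.

Lemma solutionE k :
  (laplacian e *m x) k 0 - mu * x k 0 = (k == i)%:R - (k == j)%:R.
Proof.
have := congr1 (fun A : 'cV[int]_n => A k 0) x_sol.
by rewrite mulmxBl mul_scalar_mx !mxE !andbT.
Qed.

Lemma solution_entry_geN1 k : -1 <= (laplacian e *m x) k 0 - mu * x k 0.
Proof. by rewrite solutionE; case: (k == i); case: (k == j). Qed.

Lemma solution_entry_ge1 k : 1 <= (laplacian e *m x) k 0 - mu * x k 0 -> k = i.
Proof. by rewrite solutionE; case: eqP => // _; case: (k == j). Qed.

Lemma solution_sum0 : \sum_k x k 0 = 0.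
Proof.
have sum_delta (a : 'I_n) : \sum_k ((k == a)%:R : int) = 1.
  by rewrite (bigD1 a) //= eqxx big1 ?addr0 // => k /negbTE ->.
have : \sum_k ((laplacian e *m x) k 0 - mu * x k 0) = 0.
  by under eq_bigr do rewrite solutionE; rewrite sumrB !sum_delta subrr.
rewrite sumrB sum_mul_laplacian // sub0r -mulr_sumr => /eqP.
by rewrite oppr_eq0 mulf_eq0 (negbTE mu_neq0) => /eqP.
Qed.

Lemma solution_max_gt0 : exists2 k, (forall l, x l 0 <= x k 0) & 0 < x k 0.
Proof.
have [k _ k_max] := @arg_maxP _ _ _ i xpredT (fun l => x l 0) isT.
exists k => [l|]; first exact: k_max.
rewrite ltNge; apply/negP => xk_le0.
have x0 l : x l 0 = 0.
  apply/eqP; rewrite -oppr_eq0; apply/eqP; move: l isT.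
  apply: (psumr_eq0P (F := fun l => - x l 0)) => [l _|].
    by rewrite oppr_ge0 (le_trans (k_max l _)).
  by rewrite sumrN solution_sum0 oppr0.
have := solutionE i; rewrite mul_laplacian // big1 => [|l _]; last by rewrite !x0 subrr.
by rewrite x0 mulr0 subrr eqxx (negbTE i_neq_j).
Qed.

Lemma no_solution_mu_lt0 : mu < 0 -> (exists l, e i l) -> False.
Proof.
move=> mu_lt0 [l eil]; have [k k_max xk_gt0] := solution_max_gt0.
have max_eq_i k' : x k' 0 = x k 0 -> k' = i.
  move=> xk'; apply: solution_entry_ge1.
  have : 0 <= (laplacian e *m x) k' 0.
    by apply: mul_laplacian_max_ge0 => // l'; rewrite xk'.
  rewrite xk'; nia.
have ki := max_eq_i k erefl; rewrite ki in k_max xk_gt0.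
have Lxi_le0 : (laplacian e *m x) i 0 <= 0.
  by have := solutionE i; rewrite eqxx (negbTE i_neq_j); nia.
have := mul_laplacian_max_le0 e_simple k_max Lxi_le0 eil; rewrite -ki => /max_eq_i li.
by move: eil; rewrite li (proj2 e_simple).
Qed.

Lemma no_solution_mu_gt : n%:Z + 1 < mu -> False.
Proof.
move=> mu_gt; have [k k_max xk_gt0] := solution_max_gt0.
have := mul_laplacian_max_le e_simple k_max; rewrite solution_sum0 subr0 -mulr_natr natz.
by have := solution_entry_geN1 k; nia.
Qed.

End Solution.

Theorem theorem3p1 (n : nat) (e : rel 'I_n) (mu : int) :
  simple_graph e -> connected_graph e ->
  (mu < 0 \/ (n%:Z + 1 < mu)) ->
  ~ collapsed (laplacian e) mu.
Proof.
move=> e_simple e_conn mu_out; apply=> i j i_neq_j [x x_sol].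
have mu_neq0 : mu != 0 by case: mu_out; lia.
case: mu_out => [mu_lt0 | mu_gt].
- apply: (no_solution_mu_lt0 e_simple mu_neq0 i_neq_j x_sol mu_lt0).
  exact: connect_neq_edge (e_conn i j) i_neq_j.
- exact: (no_solution_mu_gt e_simple mu_neq0 i_neq_j x_sol mu_gt).
Qed.
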